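(* For all $0<q<1$, all integers $n\ge 1$ and $1\le i\le n$, and all $t\ge 1$, if $\pi\sim\mu_{n,q}$ then $$\mathbb{P}(|\pi(i)-i|\ge t)\le 2q^t,$$ and $$c\min\left(\frac{q}{1-q},\,n-1\right)\le \mathbb{E}|\pi(i)-i|\le \min\left(\frac{2q}{1-q},\,n-1\right)$$ for some absolute constant $c>0$. In addition, if $n\ge 3$ and $1\le t\le \frac{n+5}{8}$ then $$\mathbb{P}(|\pi(i)-i|\ge t)\ge \tfrac12 q^{2t-1}.$$
   Context: For $q>0$ and an integer $n\ge1$, the Mallows measure $\mu_{n,q}$ on the symmetric group $S_n$ is defined by $\mu_{n,q}(\pi)=q^{\mathrm{inv}(\pi)}/Z_{n,q}$, where $\mathrm{inv}(\pi)=|\{(i,j): i<j,\ \pi(i)>\pi(j)\}|$ is the number of inversions of $\pi$ and $Z_{n,q}$ is the normalizing constant. *)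

From HB Require Import structures.
From mathcomp Require Import all_boot all_order all_algebra all_fingroup.
Set Implicit Arguments. Unset Strict Implicit. Unset Printing Implicit Defensive.
Import Order.TTheory GRing.Theory Num.Theory.
Local Open Scope ring_scope.

(* Permutations of {0,...,n-1} (the paper's {1,...,n}, shifted by one;
   inversions and displacements |pi(i) - i| are shift-invariant). *)

Definition inv_num n (s : 'S_n) : nat :=
  #|[set p : 'I_n * 'I_n | (p.1 < p.2)%N && (s p.2 < s p.1)%N]|.

Definition mallowsZ (R : numFieldType) n (q : R) : R :=
  \sum_(s : 'S_n) q ^+ inv_num s.

Definition mallows (R : numFieldType) n (q : R) (s : 'S_n) : R :=
  q ^+ inv_num s / mallowsZ n q.

Definition disp n (s : 'S_n) (i : 'I_n) : nat :=
  (maxn (s i) i - minn (s i) i)%N.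

Definition prob_disp_ge (R : numFieldType) n (q : R) (i : 'I_n) (t : nat) : R :=
  \sum_(s : 'S_n | (t <= disp s i)%N) mallows q s.

Definition exp_disp (R : numFieldType) n (q : R) (i : 'I_n) : R :=
  \sum_(s : 'S_n) (disp s i)%:R * mallows q s.

From mathcomp Require Import all_boot all_order all_algebra all_fingroup.
From mathcomp Require Import zify ring lra.
Set Implicit Arguments. Unset Strict Implicit. Unset Printing Implicit Defensive.
Import Order.TTheory GRing.Theory Num.Theory.

(* Let r(s) count the positions right of i holding a value smaller than s(i), so
   that s(i) - i <= r(s).  Swapping s(i) with the largest smaller value to its
   right removes at least one inversion and lowers r by at most one; as this map
   is injective, the weight of {r >= t + 1} is at most q times that of {r >= t},
   so upward displacements >= t have probability <= q^t.  Downward ones follow by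
   the symmetry s |-> w0 s w0, which preserves inversions.  Conversely, moving the
   value s(i) up by 2t - 1 (shifting the values in between down) adds at most
   2t - 1 inversions and injectively sends permutations with displacement < t to
   ones with displacement >= t, giving the lower tail bound.  The expectation is
   the sum of the tail probabilities, hence lies between the odd-power sum
   q + q^3 + ... and twice the geometric series. *)

Lemma card_le_inj_bounded (T : finType) (Y : {set T}) (f : T -> nat) a :
  {in Y &, injective f} -> (forall y, y \in Y -> (f y < a)%N) -> (#|Y| <= a)%N.
Proof.
move=> finj fa; rewrite cardE -(size_map f) -[a](size_iota 0).
apply: uniq_leq_size.
  by rewrite map_inj_in_uniq ?enum_uniq // => x y; rewrite !mem_enum; apply: finj.
by move=> x /mapP [y]; rewrite mem_enum => /fa ya ->; rewrite mem_iota.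
Qed.

Lemma card_ge_prefix n (Y : {set 'I_n}) k : (k <= n)%N ->
  (forall w : 'I_n, (w < k)%N -> w \in Y) -> (k <= #|Y|)%N.
Proof.
move=> kn kY.
have widen_inj : injective (widen_ord kn) by move=> x y [/val_inj].
rewrite -[k]card_ord -(card_imset _ widen_inj).
apply: subset_leq_card; apply/subsetP => _ /imsetP [w _ ->].
by apply: kY; exact: ltn_ord w.
Qed.

Lemma ord_ltn_neq n (x y : 'I_n) : (x < y)%N -> x != y.
Proof. by rewrite -val_eqE => /ltn_eqF ->. Qed.

Section Inversions.
Variable n : nat.
Implicit Types (s : 'S_n) (i l m : 'I_n).

Definition inversions s := [set p : 'I_n * 'I_n | (p.1 < p.2)%N && (s p.2 < s p.1)%N].

Lemma inv_numE s : inv_num s = #|inversions s|. Proof. by []. Qed.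

Definition lower_right s i := #|[set m : 'I_n | (i < m)%N && (s m < s i)%N]|.

Lemma perm_le_lower_right s i : (s i <= i + lower_right s i)%N.
Proof.
have below : (s i <= #|[set m | (s m < s i)%N]|)%N.
  have -> : [set m | (s m < s i)%N] = s @^-1: [set w : 'I_n | (w < s i)%N].
    by apply/setP => m; rewrite !inE.
  rewrite card_preimset; last exact: perm_inj.
  by apply: card_ge_prefix => [|w]; rewrite ?inE // ltnW.
apply: (leq_trans below).
apply: (leq_trans (n := #|[set m : 'I_n | (m < i)%N] :|:
                         [set m : 'I_n | (i < m)%N && (s m < s i)%N]|)).
  apply/subset_leq_card/subsetP => m; rewrite !inE.
  by case: (ltngtP m i) => // /val_inj ->; rewrite ltnn.
apply: (leq_trans (leq_card_setU _ _)); rewrite leq_add2r.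
by apply: (card_le_inj_bounded (f := val)) => [x y _ _ /val_inj|y]; rewrite ?inE.
Qed.

Definition next_lower s i l :=
  [&& (i < l)%N, (s l < s i)%N &
      [forall m : 'I_n, (i < m)%N && (s m < s i)%N ==> (s m <= s l)%N]].

Lemma next_lowerP s i l :
  reflect [/\ (i < l)%N, (s l < s i)%N &
              forall m, (i < m)%N -> (s m < s i)%N -> (s m <= s l)%N]
          (next_lower s i l).
Proof.
apply: (iffP and3P) => [[il sli /forallP smax]|[il sli smax]]; split=> //.
  by move=> m im smi; have /implyP := smax m; apply; rewrite im.
by apply/forallP => m; apply/implyP => /andP [im smi]; apply: smax.
Qed.

Lemma next_lower_exists s i : (0 < lower_right s i)%N -> exists l, next_lower s i l.
Proof.
rewrite card_gt0 => /set0Pn [m0]; rewrite inE => P0.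
case: (@arg_maxnP _ m0 (fun m => (i < m)%N && (s m < s i)%N) (fun m => val (s m)) P0)
  => l Pl lmax.
by exists l; apply/next_lowerP; case/andP: Pl; split=> // m im smi; apply: lmax; rewrite im.
Qed.

Section SwapNextLower.
Variables (s : 'S_n) (i l : 'I_n).
Hypothesis lP : next_lower s i l.
Let t := tperm i l.

Let swap_pair (p : 'I_n * 'I_n) := if (p.1 < i)%N then (p.1, t p.2) else p.

Let swap_pair_inj : injective swap_pair.
Proof.
move=> [a b] [c d]; rewrite /swap_pair /=.
case: ifP; case: ifP => // ci ai [ac bd].
- by rewrite ac; congr pair; apply: (perm_inj bd).
- by move: ci; rewrite -ac ai.
- by move: ai; rewrite ac ci.
Qed.

Let swap_pair_inversions p :
  p \in inversions (t * s) -> swap_pair p \in inversions s :\ (i, l).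
Proof.
case/next_lowerP: lP => il sli smax.
case: p => a b; rewrite inE /= !permM => /andP [ab sab].
rewrite /swap_pair /=; case: ifP => ai; rewrite !inE /= xpair_eqE.
  have ta : t a = a by apply: tpermD; rewrite eq_sym ord_ltn_neq // (ltn_trans ai il).
  rewrite ta in sab; rewrite sab (negPf (ord_ltn_neq ai)) /= andbT /t.
  by case: tpermP => _ //; exact: ltn_trans ai il.
move/negbT: ai; rewrite -leqNgt => ia; rewrite ab /=.
have [eai|nai] := eqVneq a i.
  subst a; move: sab; rewrite /t tpermL.
  have [ebl|nbl] := eqVneq b l.
    by subst b; rewrite tpermR => /(ltn_trans sli); rewrite ltnn.
  rewrite tpermD ?(ord_ltn_neq ab) 1?eq_sym // /=.
  by move/ltn_trans; apply.
have [eal|nal] := eqVneq a l.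
  subst a; move: sab; rewrite /t tpermR tpermD ?ord_ltn_neq ?(ltn_trans il ab) // => sbi.
  have := smax b (ltn_trans il ab) sbi; rewrite leq_eqVlt => /orP [/eqP sbl|//].
  by move/val_inj/perm_inj: sbl ab => ->; rewrite ltnn.
move: sab; rewrite /t [tperm i l a]tpermD 1?eq_sym //.
have [ebl|nbl] := eqVneq b l; first by subst b; rewrite tpermR; apply: ltn_trans.
by rewrite tpermD // 1?eq_sym // eq_sym ord_ltn_neq // (leq_ltn_trans ia ab).
Qed.

Lemma inv_num_swap_next_lower : (inv_num (t * s) < inv_num s)%N.
Proof.
have ilI : (i, l) \in inversions s by case/and3P: lP => il sli _; rewrite inE il sli.
rewrite !inv_numE [#|inversions s|](cardsD1 (i, l)) ilI add1n ltnS -(card_imset _ swap_pair_inj).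
by apply/subset_leq_card/subsetP => _ /imsetP [p /swap_pair_inversions pI ->].
Qed.

Lemma lower_right_swap_next_lower : (lower_right s i <= (lower_right (t * s) i).+1)%N.
Proof.
case/next_lowerP: lP => il sli smax.
apply: (leq_trans (n := #|[set l] :|: [set m : 'I_n | (i < m)%N &&
                                                     ((t * s)%g m < (t * s)%g i)%N]|)).
  apply/subset_leq_card/subsetP => m; rewrite !inE !permM /t tpermL => /andP [im smi].
  have [//|nml] := eqVneq m l.
  rewrite im tpermD /=; last by rewrite eq_sym.
    have := smax m im smi; rewrite leq_eqVlt => /orP [/eqP/val_inj/perm_inj eml|//].
    by rewrite eml eqxx in nml.
  exact: ord_ltn_neq.
by apply: (leq_trans (leq_card_setU _ _)); rewrite cards1.
Qed.

End SwapNextLower.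

Definition swap_next_lower i s : 'S_n :=
  if [pick l | next_lower s i l] is Some l then (tperm i l * s)%g else s.

Lemma swap_next_lowerP s i : (0 < lower_right s i)%N ->
  exists2 l, next_lower s i l & swap_next_lower i s = (tperm i l * s)%g.
Proof.
move=> /next_lower_exists ex; rewrite /swap_next_lower.
case: pickP => [l lP|none]; first by exists l.
by case: ex => l; rewrite none.
Qed.

Lemma swap_next_lower_inj i :
  {in [pred s | 0 < lower_right s i]%N &, injective (swap_next_lower i)}.
Proof.
move=> s1 s2 /swap_next_lowerP [l1 /next_lowerP [il1 sl1 max1] ->].
move=> /swap_next_lowerP [l2 /next_lowerP [il2 sl2 max2] ->] E.
have [el|nl] := eqVneq l1 l2; first by rewrite el in E; exact: mulgI E.
have at_pos m : (tperm i l1 * s1)%g m = (tperm i l2 * s2)%g m by rewrite E.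
have e1 := at_pos l1; have e2 := at_pos l2; have e3 := at_pos i.
rewrite !permM tpermR (tpermD (ord_ltn_neq il1)) 1?eq_sym // in e1.
rewrite !permM tpermR (tpermD (ord_ltn_neq il2)) // in e2.
rewrite !permM !tpermL in e3.
have le12 : (s1 i <= s2 i)%N.
  rewrite leqNgt; apply/negP => lt21.
  by have := max1 l2 il2; rewrite e2 e3 => /(_ lt21); rewrite leqNgt sl2.
have le21 : (s2 i <= s1 i)%N.
  rewrite leqNgt; apply/negP => lt12.
  by have := max2 l1 il1; rewrite -e1 -e3 => /(_ lt12); rewrite leqNgt sl1.
have : s2 l1 = s2 i by rewrite -e1; apply: val_inj; apply/eqP; rewrite eqn_leq le12.
by move/perm_inj => el1; rewrite el1 ltnn in il1.
Qed.

End Inversions.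

Section ReverseComplement.
Variable n : nat.
Implicit Types (s : 'S_n) (i : 'I_n).

Definition rev_perm : 'S_n := perm (@rev_ord_inj n).

Definition revc s := (rev_perm * s * rev_perm)%g.

Lemma revcE s i : revc s i = rev_ord (s (rev_ord i)).
Proof. by rewrite /revc !permM !permE. Qed.

Lemma revcK : involutive revc.
Proof. by move=> s; apply/permP => i; rewrite !revcE !rev_ordK. Qed.

Lemma revc_inj : injective revc. Proof. exact: inv_inj revcK. Qed.

Lemma inv_num_revc s : inv_num (revc s) = inv_num s.
Proof.
suff le r : (inv_num r <= inv_num (revc r))%N.
  by apply/eqP; rewrite eqn_leq le -{2}(revcK s) le.
pose f (p : 'I_n * 'I_n) := (rev_ord p.2, rev_ord p.1).
have f_inj : injective f.
  move=> [a b] [c d] /(congr1 (fun p => (rev_ord p.2, rev_ord p.1))).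
  by rewrite /= !rev_ordK.
rewrite !inv_numE -(card_imset _ f_inj); apply/subset_leq_card/subsetP.
move=> _ /imsetP [[a b] + ->]; rewrite !inE /= !revcE !rev_ordK => /andP [ab sba].
have := ltn_ord a; have := ltn_ord b; have := ltn_ord (r a); have := ltn_ord (r b).
rewrite /=; lia.
Qed.

Lemma disp_revc s i : disp (revc s) (rev_ord i) = disp s i.
Proof. by rewrite /disp revcE rev_ordK /=; have := ltn_ord (s i); have := ltn_ord i; lia. Qed.

End ReverseComplement.

Definition cycle_up (v a w : nat) : nat :=
  if w == v then v + a else if (v < w <= v + a)%N then w.-1 else w.

Section CycleUp.
Variables v a : nat.
Local Notation g := (cycle_up v a).

Lemma cycle_up_inj : injective g.
Proof. by move=> w w'; rewrite /cycle_up; do ![case: eqP => ? | case: ifP => ?]; lia. Qed.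

Lemma cycle_up_ltE w w' : w != v -> w' != v -> (g w < g w')%N = (w < w')%N.
Proof. by rewrite /cycle_up; do ![case: eqP => ? | case: ifP => ?]; lia. Qed.

Lemma cycle_up_lt_startE w : w != v -> (g w < g v)%N = (w <= v + a)%N.
Proof. by rewrite /cycle_up; do ![case: eqP => ? | case: ifP => ?]; lia. Qed.

Lemma cycle_up_start_ltE w : w != v -> (g v < g w)%N = (v + a < w)%N.
Proof. by rewrite /cycle_up; do ![case: eqP => ? | case: ifP => ?]; lia. Qed.

Lemma cycle_up_ltn n w : (v + a < n)%N -> (w < n)%N -> (g w < n)%N.
Proof. by rewrite /cycle_up; do ![case: eqP => ? | case: ifP => ?]; lia. Qed.

End CycleUp.

Section CycleUpPerm.
Variable n : nat.

Definition cycle_up_ord v a (w : 'I_n) : 'I_n :=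
  if (v + a < n)%N then insubd w (cycle_up v a w) else w.

Lemma cycle_up_ordE v a w : (v + a < n)%N -> val (cycle_up_ord v a w) = cycle_up v a w.
Proof. by move=> van; rewrite /cycle_up_ord van val_insubd cycle_up_ltn. Qed.

Lemma cycle_up_ord_inj v a : injective (cycle_up_ord v a).
Proof.
move=> w w'; case: (ltnP (v + a) n) => van.
  by move/(congr1 val); rewrite !cycle_up_ordE // => /cycle_up_inj /val_inj.
by rewrite /cycle_up_ord ltnNge van.
Qed.

Definition cycle_up_perm v a : 'S_n := perm (@cycle_up_ord_inj v a).

(* Post-composition moves the value [v = s i] up to [v + a] and shifts the values
   in between down by one, so the only new inversions are [(i, y)] with [s y] in
   [(v, v + a]]. *)
Lemma inv_num_mul_cycle_up (s : 'S_n) i a : (s i + a < n)%N ->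
  (inv_num (s * cycle_up_perm (s i) a) <= inv_num s + a)%N.
Proof.
move=> van; set v := nat_of_ord (s i).
have sneq x : x != i -> nat_of_ord (s x) != v.
  by apply: contra => /eqP /val_inj /perm_inj /eqP.
pose E := [set (i, y) | y in [set y : 'I_n | (v < s y <= v + a)%N]].
have cardE : (#|E| <= a)%N.
  apply: (leq_trans (leq_imset_card _ _)).
  apply: (card_le_inj_bounded (f := fun y => (s y - v).-1)) => [x y|y]; rewrite !inE; last by lia.
  by move=> /andP [x1 x2] /andP [y1 y2] e; apply: (perm_inj (s := s)); apply: ord_inj; lia.
rewrite !inv_numE; apply: (leq_trans (n := #|inversions s :|: E|)).
  apply/subset_leq_card/subsetP => -[x y]; rewrite !inE /= !permM !permE !cycle_up_ordE //.
  case/andP => xy; rewrite xy /=.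
  have [exi|nxi] := eqVneq x i.
    subst x; have nyi : y != i by rewrite eq_sym ord_ltn_neq.
    rewrite cycle_up_lt_startE ?sneq // => syv.
    case: (ltngtP (s y) v) => [//|vsy|/eqP]; last by rewrite (negPf (sneq _ nyi)).
    by apply/orP; right; apply/imsetP; exists y; rewrite // inE vsy.
  have [eyi|nyi] := eqVneq y i.
    by subst y; rewrite cycle_up_start_ltE ?sneq // => /(leq_ltn_trans (leq_addr a v)) ->.
  by rewrite cycle_up_ltE ?sneq // => ->.
by apply: (leq_trans (leq_card_setU _ _)); rewrite leq_add2l.
Qed.

End CycleUpPerm.

Lemma disp_lt n (s : 'S_n) i : (disp s i < n)%N.
Proof. by rewrite /disp; have := ltn_ord (s i); have := ltn_ord i; lia. Qed.

Lemma inv_num1 n : inv_num (1 : 'S_n)%g = 0%N.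
Proof.
apply/eqP; rewrite cards_eq0; apply/eqP/setP => -[a b].
by rewrite !inE !perm1 /=; apply/negbTE/negP => /andP []; lia.
Qed.

Local Open Scope ring_scope.

Lemma ler_sum_subset (R : numDomainType) (T : finType) (A B : pred T) (F : T -> R) :
  (forall x, A x -> B x) -> (forall x, 0 <= F x) ->
  \sum_(x | A x) F x <= \sum_(x | B x) F x.
Proof.
move=> AB F_ge0; rewrite [leLHS]big_mkcond [leRHS]big_mkcond.
by apply: ler_sum => x _; case: ifP => [/AB ->|_]; last case: ifP.
Qed.

Lemma sum_minn_tails (R : pzSemiRingType) (T : finType) (d : T -> nat) (F : T -> R) K :
  \sum_x (minn (d x) K)%:R * F x = \sum_(k < K) \sum_(x | (k < d x)%N) F x.
Proof.
have minn_count x : minn (d x) K = (\sum_(k < K) (k < d x)%N)%N.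
  elim: K => [|K IH]; first by rewrite big_ord0 minn0.
  by rewrite big_ord_recr /= -IH; case: (ltnP K (d x)) => /=; lia.
under eq_bigr do rewrite minn_count natr_sum mulr_suml.
rewrite exchange_big /=; apply: eq_bigr => k _.
by rewrite [RHS]big_mkcond; apply: eq_bigr => x _; case: ifP; rewrite ?mul1r ?mul0r.
Qed.

Lemma mallowsZ_gt0 (R : numFieldType) n (q : R) : 0 <= q -> 0 < mallowsZ n q.
Proof.
move=> q_ge0; rewrite /mallowsZ (bigD1 1%g) //= inv_num1 expr0.
by rewrite ltr_wpDr // sumr_ge0 // => s _; rewrite exprn_ge0.
Qed.

Section MallowsWeights.
Variables (R : realFieldType) (n : nat) (q : R).
Hypotheses (q_ge0 : 0 <= q) (q_le1 : q <= 1).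
Local Notation wt s := (q ^+ inv_num s).
Implicit Types (i : 'I_n).

Let wt_ge0 (s : 'S_n) : 0 <= wt s. Proof. exact: exprn_ge0. Qed.

Lemma lower_right_tail_step i t :
  \sum_(s : 'S_n | (t.+1 <= lower_right s i)%N) wt s <=
  q * \sum_(s : 'S_n | (t <= lower_right s i)%N) wt s.
Proof.
pose A := [set s : 'S_n | (t.+1 <= lower_right s i)%N].
have A_pos s : s \in A -> (0 < lower_right s i)%N by rewrite inE; apply: leq_trans.
rewrite (eq_bigl (fun s => s \in A)) => [|s]; last by rewrite inE.
apply: (le_trans (y := \sum_(s in A) q * wt (swap_next_lower i s))).
  apply: ler_sum => s sA; have [l lP ->] := swap_next_lowerP (A_pos s sA).
  by rewrite -exprS ler_wiXn2l // inv_num_swap_next_lower.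
rewrite -mulr_sumr ler_wpM2l // -(big_imset (fun s => wt s)) /=; last first.
  by move=> s1 s2 /A_pos s1P /A_pos s2P; apply: swap_next_lower_inj.
apply: ler_sum_subset => // _ /imsetP [s sA ->].
have [l lP ->] := swap_next_lowerP (A_pos s sA).
by have := lower_right_swap_next_lower lP; move: sA; rewrite inE; lia.
Qed.

Lemma lower_right_tail i t :
  \sum_(s : 'S_n | (t <= lower_right s i)%N) wt s <= q ^+ t * mallowsZ n q.
Proof.
elim: t => [|t IH]; first by rewrite mul1r ler_sum_subset.
by rewrite exprS -mulrA (le_trans (lower_right_tail_step i t)) // ler_wpM2l.
Qed.

Lemma shift_up_tail i t :
  \sum_(s : 'S_n | (i + t <= s i)%N) wt s <= q ^+ t * mallowsZ n q.
Proof.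
apply: le_trans (lower_right_tail i t); apply: ler_sum_subset => // s.
by have := perm_le_lower_right s i; lia.
Qed.

Lemma sum_revc (P : pred 'S_n) :
  \sum_(s : 'S_n | P s) wt s = \sum_(s : 'S_n | P (revc s)) wt s.
Proof.
by rewrite (reindex_inj (@revc_inj n)); apply: eq_bigr => s _; rewrite inv_num_revc.
Qed.

Lemma shift_down_tail i t :
  \sum_(s : 'S_n | (s i + t <= i)%N) wt s <= q ^+ t * mallowsZ n q.
Proof.
rewrite sum_revc; apply: le_trans (shift_up_tail (rev_ord i) t).
apply: ler_sum_subset => // s; rewrite revcE /=.
by have := ltn_ord (s (rev_ord i)); have := ltn_ord i; lia.
Qed.

Lemma disp_tail i t :
  \sum_(s : 'S_n | (t <= disp s i)%N) wt s <= 2 * q ^+ t * mallowsZ n q.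
Proof.
apply: (le_trans (y := \sum_(s : 'S_n | (i + t <= s i)%N) wt s +
                      \sum_(s : 'S_n | (s i + t <= i)%N) wt s)); last first.
  by rewrite -mulrA mulr2n mulrDl mul1r lerD ?shift_up_tail ?shift_down_tail.
rewrite !(big_mkcond (fun s => _ <= _)%N) -big_split /=.
apply: ler_sum => s _; case: ifP => [|_]; last by rewrite addr_ge0 //; case: ifP.
rewrite /disp => t_le; case: (leqP (i + t) (s i)) => [_|near]; last first.
  by rewrite add0r ifT //; lia.
by rewrite lerDl; case: ifP.
Qed.

(* Post-composing with the cycle [s i -> s i + 2t - 1] costs at most [2t - 1]
   inversions and pushes a displacement below [t] up to at least [t]. *)
Lemma small_disp_weight_le_left i t : (i + 3 * t <= n + 1)%N ->
  q ^+ (2 * t).-1 * \sum_(s : 'S_n | (disp s i < t)%N) wt s <=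
  \sum_(s : 'S_n | (t <= disp s i)%N) wt s.
Proof.
move=> it_le.
pose A := [set s : 'S_n | (disp s i < t)%N].
pose phi (s : 'S_n) := (s * cycle_up_perm n (s i) (2 * t).-1)%g.
have fits s : s \in A -> (s i + (2 * t).-1 < n)%N by rewrite inE /disp; lia.
have phi_i s : s \in A -> nat_of_ord (phi s i) = (s i + (2 * t).-1)%N.
  by move=> sA; rewrite permM permE cycle_up_ordE ?fits // /cycle_up eqxx.
rewrite (eq_bigl (fun s => s \in A)) => [|s]; last by rewrite inE.
apply: (le_trans (y := \sum_(s in A) wt (phi s))).
  rewrite mulr_sumr; apply: ler_sum => s sA.
  by rewrite -exprD ler_wiXn2l // addnC inv_num_mul_cycle_up ?fits.
rewrite -(big_imset (fun s => wt s)) /=; last first.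
  move=> s1 s2 s1A s2A E; have := congr1 (fun f : 'S_n => nat_of_ord (f i)) E.
  rewrite /= !phi_i // => /addIn /ord_inj s12.
  by move: E; rewrite /phi s12; apply: mulIg.
apply: ler_sum_subset => // _ /imsetP [s sA ->].
by rewrite /disp phi_i //; move: sA; rewrite inE /disp; lia.
Qed.

Lemma small_disp_weight_le i t : (6 * t <= n + 4)%N ->
  q ^+ (2 * t).-1 * \sum_(s : 'S_n | (disp s i < t)%N) wt s <=
  \sum_(s : 'S_n | (t <= disp s i)%N) wt s.
Proof.
move=> t_le; have [|far] := leqP (i + 3 * t) (n + 1).
  exact: small_disp_weight_le_left.
have revc_disp (P : pred nat) :
    \sum_(s : 'S_n | P (disp s i)) wt s = \sum_(s : 'S_n | P (disp s (rev_ord i))) wt s.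
  by rewrite sum_revc; apply: eq_bigl => s; rewrite -{1}(rev_ordK i) disp_revc.
rewrite (revc_disp (fun d => d < t)%N) (revc_disp (fun d => t <= d)%N).
by apply: small_disp_weight_le_left => //=; have := ltn_ord i; lia.
Qed.

End MallowsWeights.

Lemma geom_partial_sumE (R : comNzRingType) (q : R) K :
  (1 - q) * \sum_(k < K) q ^+ k.+1 = q - q ^+ K.+1.
Proof.
elim: K => [|K IH]; first by rewrite big_ord0 mulr0 expr1 subrr.
by rewrite big_ord_recr /= mulrDr IH [q ^+ K.+2]exprS; ring.
Qed.

Section GeometricSums.
Variables (R : realFieldType) (q : R).
Hypotheses (q_ge0 : 0 <= q) (q_lt1 : q < 1).

Lemma geom_partial_sum_le K : \sum_(k < K) q ^+ k.+1 <= q / (1 - q).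
Proof.
rewrite ler_pdivlMr ?subr_gt0 // mulrC geom_partial_sumE.
by rewrite lerBlDr lerDl exprn_ge0.
Qed.

(* If [q ^+ K <= 1/2] the sum is at least half of the full series [q / (1 - q)];
   otherwise each of its [K] terms exceeds [1/2]. *)
Lemma min_le_geom_partial_sum K :
  Num.min (q / (1 - q)) K%:R <= 2 * \sum_(k < K) q ^+ k.+1.
Proof.
set S := \sum_(k < K) q ^+ k.+1.
have S_ge0 : 0 <= S by apply: sumr_ge0 => k _; apply: exprn_ge0.
have [small|big] := lerP (q ^+ K) 2^-1.
  rewrite ge_min; apply/orP; left.
  have SE := geom_partial_sumE q K; rewrite -/S exprSr in SE.
  have : 0 <= q * (2^-1 - q ^+ K) by rewrite mulr_ge0 // subr_ge0.
  rewrite ler_pdivrMr ?subr_gt0 //; nra.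
rewrite ge_min; apply/orP; right.
have : K%:R * q ^+ K <= S.
  rewrite mulr_natl -[X in q ^+ K *+ X](card_ord K) -sumr_const.
  by apply: ler_sum => k _; rewrite ler_wiXn2l ?(ltW q_lt1).
have : 0 <= K%:R :> R by [].
nra.
Qed.

Lemma geom_partial_sum_le_odd T :
  \sum_(k < 2 * T) q ^+ k.+1 <= 2 * \sum_(k < T) q ^+ (2 * k).+1.
Proof.
rewrite -(big_mkord xpredT (fun k => q ^+ k.+1)) -(big_mkord xpredT (fun k => q ^+ (2 * k).+1)).
elim: T => [|T IH]; first by rewrite muln0 !big_geq // mulr0.
rewrite mulnS !big_nat_recr //= mulrDr.
have : q ^+ (2 * T).+2 <= q ^+ (2 * T).+1 by rewrite ler_wiXn2l // ltW.
lra.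
Qed.

Lemma min_le_geom_odd_sum T m : (m <= 6 * T)%N ->
  Num.min (q / (1 - q)) m%:R <= 12 * \sum_(k < T) q ^+ (2 * k).+1.
Proof.
move=> m_le; have x_ge0 : 0 <= q / (1 - q) by rewrite divr_ge0 // subr_ge0 ltW.
have m_le' : m%:R <= 3 * (2 * T)%:R :> R by rewrite -natrM ler_nat mulnA.
have min3 : Num.min (q / (1 - q)) m%:R <= 3 * Num.min (q / (1 - q)) (2 * T)%:R.
  have [xT|Tx] := leP (q / (1 - q)) (2 * T)%:R.
    by rewrite ge_min ler_peMl // ler1n.
  by rewrite ge_min m_le' orbT.
have := min_le_geom_partial_sum (2 * T); have := geom_partial_sum_le_odd T.
lra.
Qed.

End GeometricSums.

Section MallowsDisplacement.
Variables (R : realFieldType) (n : nat) (q : R) (i : 'I_n).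
Hypotheses (q_ge0 : 0 <= q) (q_lt1 : q < 1).
Let q_le1 : q <= 1. Proof. exact: ltW. Qed.
Let Z_gt0 : 0 < mallowsZ n q. Proof. exact: mallowsZ_gt0. Qed.

Lemma prob_disp_geE t : prob_disp_ge q i t =
  (\sum_(s : 'S_n | (t <= disp s i)%N) q ^+ inv_num s) / mallowsZ n q.
Proof. by rewrite /prob_disp_ge mulr_suml. Qed.

Lemma exp_dispE : exp_disp q i =
  (\sum_(s : 'S_n) (disp s i)%:R * q ^+ inv_num s) / mallowsZ n q.
Proof. by rewrite /exp_disp mulr_suml; apply: eq_bigr => s _; rewrite mulrA. Qed.

Lemma prob_disp_ge_ub t : prob_disp_ge q i t <= 2 * q ^+ t.
Proof. by rewrite prob_disp_geE ler_pdivrMr // disp_tail. Qed.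

Lemma prob_disp_ge_lb t : (6 * t <= n + 4)%N ->
  2^-1 * q ^+ (2 * t).-1 <= prob_disp_ge q i t.
Proof.
move=> t_le; rewrite prob_disp_geE ler_pdivlMr //.
have := small_disp_weight_le q_ge0 q_le1 i t_le.
set A := \sum_(s | (t <= _)%N) _; set B := \sum_(s | (_ < t)%N) _.
have -> : mallowsZ n q = A + B.
  rewrite /mallowsZ (bigID (fun s : 'S_n => (t <= disp s i)%N)) /=.
  by congr (_ + _); apply: eq_bigl => s; rewrite ltnNge.
have A_ge0 : 0 <= A by apply: sumr_ge0 => s _; apply: exprn_ge0.
have B_ge0 : 0 <= B by apply: sumr_ge0 => s _; apply: exprn_ge0.
have x_le1 : q ^+ (2 * t).-1 <= 1 by apply: exprn_ile1.
have x_ge0 : 0 <= q ^+ (2 * t).-1 by apply: exprn_ge0.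
nra.
Qed.

Lemma exp_disp_ub_geom : exp_disp q i <= 2 * q / (1 - q).
Proof.
rewrite exp_dispE ler_pdivrMr //.
rewrite (eq_bigr (fun s => (minn (disp s i) n)%:R * q ^+ inv_num s)) => [|s _]; last first.
  by rewrite (minn_idPl (ltnW (disp_lt s i))).
rewrite sum_minn_tails.
apply: (le_trans (y := \sum_(k < n) 2 * q ^+ k.+1 * mallowsZ n q)).
  by apply: ler_sum => k _; apply: disp_tail.
rewrite -mulr_suml -mulr_sumr ler_wpM2r ?(ltW Z_gt0) // -mulrA ler_wpM2l //.
exact: geom_partial_sum_le.
Qed.

Lemma exp_disp_ub_dim : exp_disp q i <= n.-1%:R.
Proof.
rewrite exp_dispE ler_pdivrMr // mulr_sumr; apply: ler_sum => s _.
by rewrite ler_wpM2r ?exprn_ge0 // ler_nat; have := disp_lt s i; lia.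
Qed.

Lemma exp_disp_lb : 24^-1 * Num.min (q / (1 - q)) n.-1%:R <= exp_disp q i.
Proof.
pose T := ((n + 4) %/ 6)%N.
have tails : \sum_(k < T) prob_disp_ge q i k.+1 <= exp_disp q i.
  rewrite exp_dispE ler_pdivlMr // mulr_suml.
  under eq_bigr do rewrite prob_disp_geE divfK ?gt_eqF //.
  rewrite -sum_minn_tails; apply: ler_sum => s _.
  by rewrite ler_wpM2r ?exprn_ge0 // ler_nat geq_minl.
have odd_tails : 2^-1 * \sum_(k < T) q ^+ (2 * k).+1 <= \sum_(k < T) prob_disp_ge q i k.+1.
  rewrite mulr_sumr; apply: ler_sum => k _.
  have -> : (2 * k).+1 = (2 * k.+1).-1 by rewrite mulnS.
  by apply: prob_disp_ge_lb; have := ltn_ord k; rewrite /T; lia.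
have n_le : (n.-1 <= 6 * T)%N by rewrite /T; lia.
have := min_le_geom_odd_sum q_ge0 q_lt1 n_le.
lra.
Qed.

End MallowsDisplacement.

Theorem theorem1p1 :
  exists c : rat, 0 < c /\
  forall (R : realFieldType) (q : R) (n : nat) (i : 'I_n),
    0 < q -> q < 1 ->
    [/\ (forall t : nat, (1 <= t)%N -> prob_disp_ge q i t <= 2 * q ^+ t),
        ratr c * Num.min (q / (1 - q)) (n.-1)%:R <= exp_disp q i,
        exp_disp q i <= Num.min (2 * q / (1 - q)) (n.-1)%:R &
        (3 <= n)%N ->
        forall t : nat, (1 <= t)%N -> (8 * t <= n + 5)%N ->
          (2^-1) * q ^+ (2 * t).-1 <= prob_disp_ge q i t].
Proof.
exists 24%:R^-1; split=> [|R q n i /ltW q_ge0 q_lt1]; first by rewrite invr_gt0.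
split.
- by move=> t _; apply: prob_disp_ge_ub.
- by rewrite fmorphV rmorph_nat; apply: exp_disp_lb.
- by rewrite le_min exp_disp_ub_geom ?exp_disp_ub_dim.
- by move=> _ t _ t_le; apply: prob_disp_ge_lb; lia.
Qed.
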